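(* QHC is a strongly conservative extension of intuitionistic predicate calculus QH: if $\alpha_1,\dots,\alpha_n,\alpha$ are problems built from atomic problems and $\bot$ using only intuitionistic connectives and quantifiers (no $!$, $?$), and $\alpha_1,\dots,\alpha_n\vdash_{\mathrm{QHC}}\alpha$, then $\alpha_1,\dots,\alpha_n\vdash_{\mathrm{QH}}\alpha$.
   Context: QHC is a two-sorted first-order calculus. Its only terms are individual variables. Every formula is either a problem (denoted by Greek letters $\alpha,\beta,\gamma,\dots$) or a proposition (denoted by Latin letters $p,q,\dots$). Atomic formulas are proposition variables $p(t_1,\dots,t_n)$ (of proposition type), problem variables $\pi(t_1,\dots,t_n)$ (of problem type), and the constants $0$ (a proposition, classical falsity) and $\bot$ (a problem, intuitionistic absurdity). Propositions are closed under the classical connectives $\land,\lor,\to$ and quantifiers $\exists,\forall$; problems are closed under the intuitionistic connectives $\land,\lor,\to$ and quantifiers $\exists,\forall$ (the same symbols are used, distinguished by the type of the arguments). $\neg p$ abbreviates $p\to 0$, $\neg\alpha$ abbreviates $\alpha\to\bot$, and $\leftrightarrow$ is defined as usual. There are two type-conversion operators: if $p$ is a proposition then $!p$ is a problem, and if $\alpha$ is a problem then $?\alpha$ is a proposition. Deductive system of QHC: all axioms and rules of classical predicate logic applied to all propositions; all postulates and rules of intuitionistic predicate logic applied to all problems; the rules $p\,/\,!p$ and $\alpha\,/\,?\alpha$; and the schemas $?!p\to p$; $\alpha\to\, !?\alpha$; $!(p\to q)\to(!p\to !q)$; $?(\alpha\to\beta)\to(?\alpha\to ?\beta)$; $!0\to\bot$;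 $?(\alpha\land\beta)\leftrightarrow ?\alpha\land ?\beta$; $?(\alpha\lor\beta)\leftrightarrow ?\alpha\lor ?\beta$; $?\bot\to 0$; $?\exists x\,\alpha(x)\leftrightarrow\exists x\,?\alpha(x)$; $?\forall x\,\alpha(x)\to\forall x\,?\alpha(x)$ (usual variable side conditions implicit). $\vdash A$ means $A$ is derivable in QHC; $A\Rightarrow B$ means $\vdash A\to B$ and $A\Leftrightarrow B$ means $\vdash A\leftrightarrow B$ (with $A,B$ of the same type); $A\vdash B$ means $B$ is derivable in QHC from the premise $A$. Notation: $\Box p := ?!p$ (a proposition) and $\nabla\alpha := !?\alpha$ (a problem). QC and QH denote classical and intuitionistic predicate calculus. *)

(* Syntax and deductive systems of QHC and QH.
   Individual variables are de Bruijn indices (terms are only variables). *)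
From Stdlib Require Import List.
Import ListNotations.

Inductive sort : Type := SPrp | SPrb.

Inductive form : sort -> Type :=
| Atom  : forall s, nat -> list nat -> form s
| Fal   : forall s, form s                      (* 0 for SPrp, bot for SPrb *)
| Conj  : forall s, form s -> form s -> form s
| Disj  : forall s, form s -> form s -> form s
| Imp   : forall s, form s -> form s -> form s
| All   : forall s, form s -> form s
| Ex    : forall s, form s -> form s
| Bang  : form SPrp -> form SPrb
| Quest : form SPrb -> form SPrp.

Definition up (f : nat -> nat) : nat -> nat :=
  fun n => match n with 0 => 0 | S m => S (f m) end.

Fixpoint rename {s} (f : nat -> nat) (A : form s) : form s :=
  match A in form s return form s with
  | Atom s n ts => Atom s n (map f ts)
  | Fal s => Fal s
  | Conj s A B => Conj s (rename f A) (rename f B)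
  | Disj s A B => Disj s (rename f A) (rename f B)
  | Imp s A B => Imp s (rename f A) (rename f B)
  | All s A => All s (rename (up f) A)
  | Ex s A => Ex s (rename (up f) A)
  | Bang p => Bang (rename f p)
  | Quest a => Quest (rename f a)
  end.

Definition inst (t : nat) : nat -> nat :=
  fun n => match n with 0 => t | S m => m end.

Definition lift {s} (A : form s) : form s := rename S A.
Definition subst1 {s} (t : nat) (A : form s) : form s := rename (inst t) A.
Definition Iff {s} (A B : form s) : form s := Conj s (Imp s A B) (Imp s B A).

(* Derivability in QHC from a list of problem premises.
   Premises may be used like axioms; all rules (incl. generalization and
   p/!p, alpha/?alpha) apply to derived formulas. *)
Inductive QHC_der (G : list (form SPrb)) : forall s, form s -> Prop :=
| q_hyp : forall a, In a G -> QHC_der G SPrb a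
| q_ax1 : forall s (A B : form s), QHC_der G s (Imp s A (Imp s B A))
| q_ax2 : forall s (A B C : form s),
    QHC_der G s (Imp s (Imp s A (Imp s B C)) (Imp s (Imp s A B) (Imp s A C)))
| q_ax3 : forall s (A B : form s), QHC_der G s (Imp s (Conj s A B) A)
| q_ax4 : forall s (A B : form s), QHC_der G s (Imp s (Conj s A B) B)
| q_ax5 : forall s (A B : form s), QHC_der G s (Imp s A (Imp s B (Conj s A B)))
| q_ax6 : forall s (A B : form s), QHC_der G s (Imp s A (Disj s A B))
| q_ax7 : forall s (A B : form s), QHC_der G s (Imp s B (Disj s A B))
| q_ax8 : forall s (A B C : form s),
    QHC_der G s (Imp s (Imp s A C) (Imp s (Imp s B C) (Imp s (Disj s A B) C)))
| q_ax9 : forall s (A : form s), QHC_der G s (Imp s (Fal s) A)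
| q_dne : forall (A : form SPrp),
    QHC_der G SPrp (Imp SPrp (Imp SPrp (Imp SPrp A (Fal SPrp)) (Fal SPrp)) A)
| q_all_e : forall s (A : form s) t, QHC_der G s (Imp s (All s A) (subst1 t A))
| q_ex_i : forall s (A : form s) t, QHC_der G s (Imp s (subst1 t A) (Ex s A))
| q_mp : forall s (A B : form s), QHC_der G s (Imp s A B) -> QHC_der G s A -> QHC_der G s B
| q_gen : forall s (A : form s), QHC_der G s A -> QHC_der G s (All s A)
| q_all_r : forall s (A B : form s),
    QHC_der G s (Imp s (lift B) A) -> QHC_der G s (Imp s B (All s A))
| q_ex_r : forall s (A B : form s),
    QHC_der G s (Imp s A (lift B)) -> QHC_der G s (Imp s (Ex s A) B)
| q_bang_r : forall p, QHC_der G SPrp p -> QHC_der G SPrb (Bang p)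
| q_quest_r : forall a, QHC_der G SPrb a -> QHC_der G SPrp (Quest a)
| q_s1 : forall p, QHC_der G SPrp (Imp SPrp (Quest (Bang p)) p)
| q_s2 : forall a, QHC_der G SPrb (Imp SPrb a (Bang (Quest a)))
| q_s3 : forall p q, QHC_der G SPrb
    (Imp SPrb (Bang (Imp SPrp p q)) (Imp SPrb (Bang p) (Bang q)))
| q_s4 : forall a b, QHC_der G SPrp
    (Imp SPrp (Quest (Imp SPrb a b)) (Imp SPrp (Quest a) (Quest b)))
| q_s5 : QHC_der G SPrb (Imp SPrb (Bang (Fal SPrp)) (Fal SPrb))
| q_s6 : forall a b, QHC_der G SPrp
    (Iff (Quest (Conj SPrb a b)) (Conj SPrp (Quest a) (Quest b)))
| q_s7 : forall a b, QHC_der G SPrp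
    (Iff (Quest (Disj SPrb a b)) (Disj SPrp (Quest a) (Quest b)))
| q_s8 : QHC_der G SPrp (Imp SPrp (Quest (Fal SPrb)) (Fal SPrp))
| q_s9 : forall a, QHC_der G SPrp (Iff (Quest (Ex SPrb a)) (Ex SPrp (Quest a)))
| q_s10 : forall a, QHC_der G SPrp (Imp SPrp (Quest (All SPrb a)) (All SPrp (Quest a))).

Inductive iform : Type :=
| IAtom : nat -> list nat -> iform
| IBot  : iform
| IConj : iform -> iform -> iform
| IDisj : iform -> iform -> iform
| IImp  : iform -> iform -> iform
| IAll  : iform -> iform
| IEx   : iform -> iform.

Fixpoint irename (f : nat -> nat) (A : iform) : iform :=
  match A with
  | IAtom n ts => IAtom n (map f ts)
  | IBot => IBot
  | IConj A B => IConj (irename f A) (irename f B)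
  | IDisj A B => IDisj (irename f A) (irename f B)
  | IImp A B => IImp (irename f A) (irename f B)
  | IAll A => IAll (irename (up f) A)
  | IEx A => IEx (irename (up f) A)
  end.

Definition ilift (A : iform) : iform := irename S A.
Definition isubst1 (t : nat) (A : iform) : iform := irename (inst t) A.

Inductive QH_der (G : list iform) : iform -> Prop :=
| h_hyp : forall a, In a G -> QH_der G a
| h_ax1 : forall A B, QH_der G (IImp A (IImp B A))
| h_ax2 : forall A B C,
    QH_der G (IImp (IImp A (IImp B C)) (IImp (IImp A B) (IImp A C)))
| h_ax3 : forall A B, QH_der G (IImp (IConj A B) A)
| h_ax4 : forall A B, QH_der G (IImp (IConj A B) B)
| h_ax5 : forall A B, QH_der G (IImp A (IImp B (IConj A B)))
| h_ax6 : forall A B, QH_der G (IImp A (IDisj A B))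
| h_ax7 : forall A B, QH_der G (IImp B (IDisj A B))
| h_ax8 : forall A B C,
    QH_der G (IImp (IImp A C) (IImp (IImp B C) (IImp (IDisj A B) C)))
| h_ax9 : forall A, QH_der G (IImp IBot A)
| h_all_e : forall A t, QH_der G (IImp (IAll A) (isubst1 t A))
| h_ex_i : forall A t, QH_der G (IImp (isubst1 t A) (IEx A))
| h_mp : forall A B, QH_der G (IImp A B) -> QH_der G A -> QH_der G B
| h_gen : forall A, QH_der G A -> QH_der G (IAll A)
| h_all_r : forall A B, QH_der G (IImp (ilift B) A) -> QH_der G (IImp B (IAll A))
| h_ex_r : forall A B, QH_der G (IImp A (ilift B)) -> QH_der G (IImp (IEx A) B).

Fixpoint emb (A : iform) : form SPrb :=
  match A with
  | IAtom n ts => Atom SPrb n ts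
  | IBot => Fal SPrb
  | IConj A B => Conj SPrb (emb A) (emb B)
  | IDisj A B => Disj SPrb (emb A) (emb B)
  | IImp A B => Imp SPrb (emb A) (emb B)
  | IAll A => All SPrb (emb A)
  | IEx A => Ex SPrb (emb A)
  end.

(* Proof idea: a negative (Kolmogorov-style) translation [trans] sends every
   QHC formula to a pure intuitionistic formula.  Problems are translated
   literally, propositions are translated under a double negation, [!p] is
   sent to the translation of [p], and [?a] to the double negation of the
   translation of [a].  Uniformly, a formula of sort [s] built with a
   connective is wrapped by the modality [wrap s], which is double negation
   for propositions and the identity for problems. *)
From Stdlib Require Import List.
Import ListNotations.

Lemma irename_ext X f g :
  (forall n, f n = g n) -> irename f X = irename g X.
Proof.
  revert f g; induction X; intros f g H; simpl; f_equal; auto.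
  - now apply map_ext.
  - apply IHX; intros [|n]; simpl; auto.
  - apply IHX; intros [|n]; simpl; auto.
Qed.

Lemma irename_comp X f g :
  irename f (irename g X) = irename (fun n => f (g n)) X.
Proof.
  revert f g; induction X; intros f g; simpl; f_equal; auto.
  - now rewrite map_map.
  - rewrite IHX; apply irename_ext; now intros [|n].
  - rewrite IHX; apply irename_ext; now intros [|n].
Qed.

Lemma irename_id X f : (forall n, f n = n) -> irename f X = X.
Proof.
  revert f; induction X; intros f H; simpl; f_equal; auto.
  - rewrite (map_ext f (fun x => x)); auto. apply map_id.
  - apply IHX; intros [|n]; simpl; auto.
  - apply IHX; intros [|n]; simpl; auto.
Qed.

(* Shifting the free variables under a binder and then instantiating the
   bound variable by itself does nothing; this is what lets the quantifier
   rules of QH move a formula across a fresh binder. *)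
Lemma isubst1_shift X : isubst1 0 (irename (up S) X) = X.
Proof.
  unfold isubst1. rewrite irename_comp. apply irename_id. now intros [|n].
Qed.

Definition ineg (X : iform) : iform := IImp X IBot.
Definition nn (X : iform) : iform := ineg (ineg X).

Definition wrap (s : sort) (X : iform) : iform :=
  match s with SPrp => nn X | SPrb => X end.

Fixpoint trans {s} (A : form s) : iform :=
  match A with
  | Atom s n ts => wrap s (IAtom n ts)
  | Fal s => wrap s IBot
  | Conj s A B => wrap s (IConj (trans A) (trans B))
  | Disj s A B => wrap s (IDisj (trans A) (trans B))
  | Imp s A B => wrap s (IImp (trans A) (trans B))
  | All s A => wrap s (IAll (trans A))
  | Ex s A => wrap s (IEx (trans A))
  | Bang p => trans p
  | Quest a => nn (trans a)
  end.

Lemma trans_rename s (A : form s) f : trans (rename f A) = irename f (trans A).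
Proof.
  revert f; induction A; intros f; simpl;
    try destruct s; simpl;
    repeat match goal with H : forall f, trans (rename f ?X) = _ |- _ =>
             rewrite H end;
    reflexivity.
Qed.

Lemma trans_lift s (A : form s) : trans (lift A) = ilift (trans A).
Proof. apply trans_rename. Qed.

Lemma trans_subst1 s t (A : form s) : trans (subst1 t A) = isubst1 t (trans A).
Proof. apply trans_rename. Qed.

Lemma trans_emb a : trans (emb a) = a.
Proof. induction a; simpl; congruence. Qed.

Section Translation.
Variable G : list iform.

(* A contextual calculus over QH: [Nd D B] means [D1 -> ... -> Dn -> B]
   is derivable from [G] (with [D] listing the hypotheses, last first). *)

Fixpoint imps (D : list iform) (B : iform) : iform :=
  match D with [] => B | A :: D' => imps D' (IImp A B) end.

Definition Nd (D : list iform) (B : iform) : Prop := QH_der G (imps D B).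

Lemma qh_refl A : QH_der G (IImp A A).
Proof.
  exact (h_mp _ _ _ (h_mp _ _ _ (h_ax2 G A (IImp A A) A) (h_ax1 G A (IImp A A)))
              (h_ax1 G A A)).
Qed.

(* Modus ponens and theorems lift to any context; both are proved together
   by induction on the context, using the S and K axioms. *)
Lemma nd_mp_ax D :
  (forall A B, Nd D (IImp A B) -> Nd D A -> Nd D B) /\
  (forall X, QH_der G X -> Nd D X).
Proof.
  induction D as [|a D [mpD axD]]; split; unfold Nd in *; simpl; intros.
  - eapply h_mp; eauto.
  - auto.
  - eapply mpD; [eapply mpD; [apply axD; apply h_ax2|]|]; eauto.
  - eapply mpD; [apply axD; apply h_ax1|]. auto.
Qed.

Lemma nd_mp D A B : Nd D (IImp A B) -> Nd D A -> Nd D B.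
Proof. apply (proj1 (nd_mp_ax D)). Qed.

Lemma nd_ax D X : QH_der G X -> Nd D X.
Proof. apply (proj2 (nd_mp_ax D)). Qed.

Lemma nd_intro D A B : Nd (A :: D) B -> Nd D (IImp A B).
Proof. auto. Qed.

Lemma nd_closed X : Nd [] X -> QH_der G X.
Proof. auto. Qed.

Lemma nd_hyp D A : In A D -> Nd D A.
Proof.
  induction D as [|a D IH]; intros H; [destruct H|destruct H as [<-|H]].
  - change (Nd D (IImp a a)). apply nd_ax, qh_refl.
  - change (Nd D (IImp a A)). eapply nd_mp; [apply nd_ax, h_ax1|]. auto.
Qed.

Lemma nd_weaken D D' B : Nd D B -> incl D D' -> Nd D' B.
Proof.
  intros H Hincl. apply (nd_ax D') in H. revert B H.
  induction D as [|a D IH]; simpl; intros B H; auto.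
  eapply nd_mp.
  - apply IH; [intros z Hz; apply Hincl; now right | exact H].
  - apply nd_hyp, Hincl; now left.
Qed.

Lemma nd_pair D A B : Nd D A -> Nd D B -> Nd D (IConj A B).
Proof. intros. eapply nd_mp; [eapply nd_mp; [apply nd_ax, h_ax5|]|]; eauto. Qed.

Lemma nd_fst D A B : Nd D (IConj A B) -> Nd D A.
Proof. intros. eapply nd_mp; [apply nd_ax, h_ax3|]; eauto. Qed.

Lemma nd_snd D A B : Nd D (IConj A B) -> Nd D B.
Proof. intros. eapply nd_mp; [apply nd_ax, h_ax4|]; eauto. Qed.

Lemma nd_inl D A B : Nd D A -> Nd D (IDisj A B).
Proof. intros. eapply nd_mp; [apply nd_ax, h_ax6|]; eauto. Qed.

Lemma nd_inr D A B : Nd D B -> Nd D (IDisj A B).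
Proof. intros. eapply nd_mp; [apply nd_ax, h_ax7|]; eauto. Qed.

Lemma nd_case D A B C :
  Nd D (IDisj A B) -> Nd (A :: D) C -> Nd (B :: D) C -> Nd D C.
Proof.
  intros HAB HA HB.
  eapply nd_mp; [eapply nd_mp; [eapply nd_mp; [apply nd_ax, (h_ax8 G A B C)|]|]|];
    eauto.
Qed.

Lemma nd_abort D X : Nd D IBot -> Nd D X.
Proof. intros. eapply nd_mp; [apply nd_ax, h_ax9|]; eauto. Qed.

Lemma nd_apply D A B : QH_der G (IImp A B) -> Nd D A -> Nd D B.
Proof. intros H. apply nd_mp, nd_ax, H. Qed.

Ltac hyp := apply nd_hyp; simpl; repeat (first [left; reflexivity | right]).

(* Double negation is a monad: unit and bind. *)

Lemma nn_unit D X : Nd D X -> Nd D (nn X).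
Proof.
  intros H. apply nd_intro. apply nd_mp with X; [hyp|].
  eapply nd_weaken; [exact H | intros z Hz; now right].
Qed.

Lemma nn_bind D X Y : Nd D (nn X) -> Nd (X :: D) (nn Y) -> Nd D (nn Y).
Proof.
  intros HX HY. apply nd_intro. apply nd_mp with (ineg X).
  - eapply nd_weaken; [exact HX | intros z Hz; now right].
  - apply nd_intro. apply nd_mp with (ineg Y); [|hyp].
    eapply nd_weaken; [exact HY | intros z Hz; simpl in *; tauto].
Qed.

Lemma wrap_unit D s X : Nd D X -> Nd D (wrap s X).
Proof. destruct s; [apply nn_unit | auto]. Qed.

Lemma wrap_bind D s X Y :
  Nd D (wrap s X) -> Nd (X :: D) (wrap s Y) -> Nd D (wrap s Y).
Proof.
  destruct s; simpl; [apply nn_bind|].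
  intros HX HY. exact (nd_mp _ _ _ (nd_intro _ _ _ HY) HX).
Qed.

Lemma wrap_bot D s : Nd D (wrap s IBot) -> Nd D IBot.
Proof.
  destruct s; simpl; auto.
  intros H. eapply nd_mp; [exact H | apply nd_ax, qh_refl].
Qed.

Definition stable (s : sort) (X : iform) : Prop := QH_der G (IImp (wrap s X) X).

Lemma wrap_run D s Y : stable s Y -> Nd D (wrap s Y) -> Nd D Y.
Proof. apply nd_apply. Qed.

Lemma stable_wrap s X : stable s (wrap s X).
Proof.
  destruct s; simpl; [|apply qh_refl].
  apply nd_closed, nd_intro. eapply nn_bind; hyp.
Qed.

Lemma trans_stable s (A : form s) : stable s (trans A).
Proof.
  destruct A; simpl; try apply stable_wrap.
  apply qh_refl.
Qed.

Lemma stable_imp s A B : stable s B -> stable s (IImp A B).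
Proof.
  intros SB. apply nd_closed, nd_intro, nd_intro, (wrap_run _ _ _ SB).
  apply wrap_bind with (IImp A B); [hyp|]. apply wrap_unit. eapply nd_mp; hyp.
Qed.

(* Soundness of the axioms and rules shared by both sorts, uniformly in the
   sort: the translation of each instance, written with [wrap s]. *)

Lemma sound_ax1 s P Q : QH_der G (wrap s (IImp P (wrap s (IImp Q P)))).
Proof. apply nd_closed, wrap_unit, nd_intro, wrap_unit, nd_intro. hyp. Qed.

Lemma sound_ax2 s A B C : stable s C ->
  QH_der G (wrap s (IImp (wrap s (IImp A (wrap s (IImp B C))))
                         (wrap s (IImp (wrap s (IImp A B)) (wrap s (IImp A C)))))).
Proof.
  intros SC. apply nd_closed, wrap_unit, nd_intro, wrap_unit, nd_intro,
    wrap_unit, nd_intro, (wrap_run _ _ _ SC).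
  apply wrap_bind with (IImp A (wrap s (IImp B C))); [hyp|].
  apply wrap_bind with (IImp B C); [eapply nd_mp; hyp|].
  apply wrap_bind with (IImp A B); [hyp|].
  apply wrap_unit. eapply nd_mp; [hyp|]. eapply nd_mp; hyp.
Qed.

Lemma sound_ax3 s A B : stable s A -> QH_der G (wrap s (IImp (wrap s (IConj A B)) A)).
Proof.
  intros SA. apply nd_closed, wrap_unit, nd_intro, (wrap_run _ _ _ SA).
  apply wrap_bind with (IConj A B); [hyp|]. apply wrap_unit. eapply nd_fst; hyp.
Qed.

Lemma sound_ax4 s A B : stable s B -> QH_der G (wrap s (IImp (wrap s (IConj A B)) B)).
Proof.
  intros SB. apply nd_closed, wrap_unit, nd_intro, (wrap_run _ _ _ SB).
  apply wrap_bind with (IConj A B); [hyp|]. apply wrap_unit. eapply nd_snd; hyp.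
Qed.

Lemma sound_ax5 s A B :
  QH_der G (wrap s (IImp A (wrap s (IImp B (wrap s (IConj A B)))))).
Proof.
  apply nd_closed, wrap_unit, nd_intro, wrap_unit, nd_intro, wrap_unit.
  apply nd_pair; hyp.
Qed.

Lemma sound_ax6 s A B : QH_der G (wrap s (IImp A (wrap s (IDisj A B)))).
Proof. apply nd_closed, wrap_unit, nd_intro, wrap_unit, nd_inl. hyp. Qed.

Lemma sound_ax7 s A B : QH_der G (wrap s (IImp B (wrap s (IDisj A B)))).
Proof. apply nd_closed, wrap_unit, nd_intro, wrap_unit, nd_inr. hyp. Qed.

Lemma sound_ax8 s A B C : stable s C ->
  QH_der G (wrap s (IImp (wrap s (IImp A C))
                         (wrap s (IImp (wrap s (IImp B C))
                                       (wrap s (IImp (wrap s (IDisj A B)) C)))))).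
Proof.
  intros SC. apply nd_closed, wrap_unit, nd_intro, wrap_unit, nd_intro,
    wrap_unit, nd_intro, (wrap_run _ _ _ SC).
  apply wrap_bind with (IDisj A B); [hyp|].
  eapply nd_case; [hyp| |].
  - apply wrap_bind with (IImp A C); [hyp|]. apply wrap_unit. eapply nd_mp; hyp.
  - apply wrap_bind with (IImp B C); [hyp|]. apply wrap_unit. eapply nd_mp; hyp.
Qed.

Lemma sound_ax9 s A : QH_der G (wrap s (IImp (wrap s IBot) A)).
Proof. apply nd_closed, wrap_unit, nd_intro, nd_abort, (wrap_bot _ s). hyp. Qed.

Lemma sound_all_e s P t : stable s (isubst1 t P) ->
  QH_der G (wrap s (IImp (wrap s (IAll P)) (isubst1 t P))).
Proof.
  intros SP. apply nd_closed, wrap_unit, nd_intro, (wrap_run _ _ _ SP).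
  apply wrap_bind with (IAll P); [hyp|].
  apply wrap_unit. apply (nd_apply _ _ _ (h_all_e G P t)). hyp.
Qed.

Lemma sound_ex_i s P t : QH_der G (wrap s (IImp (isubst1 t P) (wrap s (IEx P)))).
Proof.
  apply nd_closed, wrap_unit, nd_intro, wrap_unit.
  apply (nd_apply _ _ _ (h_ex_i G P t)). hyp.
Qed.

Lemma unwrap_imp s A B : stable s B ->
  QH_der G (wrap s (IImp A B)) -> QH_der G (IImp A B).
Proof. intros SB H. exact (h_mp _ _ _ (stable_imp s A B SB) H). Qed.

Lemma sound_mp s A B : stable s B ->
  QH_der G (wrap s (IImp A B)) -> QH_der G A -> QH_der G B.
Proof. intros SB HAB HA. exact (h_mp _ _ _ (unwrap_imp s A B SB HAB) HA). Qed.

Lemma sound_gen s P : QH_der G P -> QH_der G (wrap s (IAll P)).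
Proof. intros H. apply nd_closed, wrap_unit, nd_ax, h_gen, H. Qed.

Lemma sound_all_r s A B : stable s A ->
  QH_der G (wrap s (IImp (ilift B) A)) -> QH_der G (wrap s (IImp B (wrap s (IAll A)))).
Proof.
  intros SA H. apply (unwrap_imp s _ _ SA), h_all_r in H.
  apply nd_closed, wrap_unit, nd_intro, wrap_unit, (nd_apply _ _ _ H). hyp.
Qed.

Lemma sound_ex_r s A B : stable s (ilift B) -> stable s B ->
  QH_der G (wrap s (IImp A (ilift B))) -> QH_der G (wrap s (IImp (wrap s (IEx A)) B)).
Proof.
  intros SlB SB H. apply (unwrap_imp s _ _ SlB), h_ex_r in H.
  apply nd_closed, wrap_unit, nd_intro, (wrap_run _ _ _ SB).
  apply wrap_bind with (IEx A); [hyp|]. apply wrap_unit, (nd_apply _ _ _ H). hyp.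
Qed.

(* Soundness of the classical axiom: translated propositions are
   double-negation stable, which validates double negation elimination. *)
Lemma sound_dne A : stable SPrp A ->
  QH_der G (nn (IImp (nn (IImp (nn (IImp A (nn IBot))) (nn IBot))) A)).
Proof.
  intros SA. apply nd_closed, nn_unit, nd_intro, (wrap_run _ _ _ SA).
  apply nd_intro, (wrap_bot _ SPrp).
  apply nn_bind with (IImp (nn (IImp A (nn IBot))) (nn IBot)); [hyp|].
  eapply nd_mp; [hyp|]. apply nn_unit, nd_intro, nd_abort.
  apply nd_mp with A; hyp.
Qed.

Lemma nn_theorem X : QH_der G X -> QH_der G (nn X).
Proof. intros H. apply nd_closed, nn_unit, nd_ax, H. Qed.

Lemma nn_return X : QH_der G (IImp X (nn X)).
Proof. apply nd_closed, nd_intro, nn_unit. hyp. Qed.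

Lemma nn_bot_elim : QH_der G (IImp (nn IBot) IBot).
Proof. apply nd_closed, nd_intro, (wrap_bot _ SPrp). hyp. Qed.

Lemma nn_dist_imp A B : QH_der G (IImp (nn (IImp A B)) (nn (IImp (nn A) (nn B)))).
Proof.
  apply nd_closed, nd_intro, nn_unit, nd_intro.
  apply nn_bind with (IImp A B); [hyp|].
  apply nn_bind with A; [hyp|]. apply nn_unit. eapply nd_mp; hyp.
Qed.

Lemma nn_iff X Y : QH_der G (IImp X Y) -> QH_der G (IImp Y X) ->
  QH_der G (nn (IConj (nn (IImp X Y)) (nn (IImp Y X)))).
Proof. intros. apply nn_theorem. apply nd_closed, nd_pair; apply nn_unit, nd_ax; auto. Qed.

Lemma nn_conj_split A B : QH_der G (IImp (nn (IConj A B)) (nn (IConj (nn A) (nn B)))).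
Proof.
  apply nd_closed, nd_intro. apply nn_bind with (IConj A B); [hyp|].
  apply nn_unit, nd_pair; apply nn_unit; [eapply nd_fst | eapply nd_snd]; hyp.
Qed.

Lemma nn_conj_join A B : QH_der G (IImp (nn (IConj (nn A) (nn B))) (nn (IConj A B))).
Proof.
  apply nd_closed, nd_intro. apply nn_bind with (IConj (nn A) (nn B)); [hyp|].
  apply nn_bind with A; [eapply nd_fst; hyp|].
  apply nn_bind with B; [eapply nd_snd; hyp|].
  apply nn_unit, nd_pair; hyp.
Qed.

Lemma nn_disj_split A B : QH_der G (IImp (nn (IDisj A B)) (nn (IDisj (nn A) (nn B)))).
Proof.
  apply nd_closed, nd_intro. apply nn_bind with (IDisj A B); [hyp|].
  apply nn_unit. eapply nd_case; [hyp| |].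
  - apply nd_inl, nn_unit. hyp.
  - apply nd_inr, nn_unit. hyp.
Qed.

Lemma nn_disj_join A B : QH_der G (IImp (nn (IDisj (nn A) (nn B))) (nn (IDisj A B))).
Proof.
  apply nd_closed, nd_intro. apply nn_bind with (IDisj (nn A) (nn B)); [hyp|].
  eapply nd_case; [hyp| |].
  - apply nn_bind with A; [hyp|]. apply nn_unit, nd_inl. hyp.
  - apply nn_bind with B; [hyp|]. apply nn_unit, nd_inr. hyp.
Qed.

Lemma ex_intro_shift P : QH_der G (IImp P (IEx (irename (up S) P))).
Proof. pose proof (h_ex_i G (irename (up S) P) 0) as H. now rewrite isubst1_shift in H. Qed.

Lemma all_elim_shift P : QH_der G (IImp (IAll (irename (up S) P)) P).
Proof. pose proof (h_all_e G (irename (up S) P) 0) as H. now rewrite isubst1_shift in H. Qed.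

Lemma nn_ex_split A : QH_der G (IImp (nn (IEx A)) (nn (IEx (nn A)))).
Proof.
  assert (Hin : QH_der G (IImp (IEx A) (IEx (nn A)))).
  { apply h_ex_r. apply nd_closed, nd_intro.
    apply (nd_apply _ _ _ (ex_intro_shift (nn A))), nn_unit. hyp. }
  apply nd_closed, nd_intro. apply nn_bind with (IEx A); [hyp|].
  apply nn_unit, (nd_apply _ _ _ Hin). hyp.
Qed.

Lemma nn_ex_join A : QH_der G (IImp (nn (IEx (nn A))) (nn (IEx A))).
Proof.
  assert (Hout : QH_der G (IImp (IEx (nn A)) (nn (IEx A)))).
  { apply h_ex_r. apply nd_closed, nd_intro.
    apply nn_bind with A; [hyp|]. apply nn_unit, (nd_apply _ _ _ (ex_intro_shift A)). hyp. }
  apply nd_closed, nd_intro. apply nn_bind with (IEx (nn A)); [hyp|].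
  apply (nd_apply _ _ _ Hout). hyp.
Qed.

Lemma nn_all_in A : QH_der G (IImp (nn (IAll A)) (nn (IAll (nn A)))).
Proof.
  assert (Hin : QH_der G (IImp (IAll A) (IAll (nn A)))).
  { apply h_all_r. apply nd_closed, nd_intro, nn_unit.
    apply (nd_apply _ _ _ (all_elim_shift A)). hyp. }
  apply nd_closed, nd_intro. apply nn_bind with (IAll A); [hyp|].
  apply nn_unit, (nd_apply _ _ _ Hin). hyp.
Qed.

End Translation.

Lemma trans_sound (Gamma : list iform) s (A : form s) :
  QHC_der (map emb Gamma) s A -> QH_der Gamma (trans A).
Proof.
  induction 1; cbn [trans] in *; rewrite ?trans_subst1, ?trans_lift in *.
  - apply in_map_iff in H as [b [<- Hb]]. rewrite trans_emb. now apply h_hyp.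
  - apply sound_ax1.
  - apply sound_ax2, trans_stable.
  - apply sound_ax3, trans_stable.
  - apply sound_ax4, trans_stable.
  - apply sound_ax5.
  - apply sound_ax6.
  - apply sound_ax7.
  - apply sound_ax8, trans_stable.
  - apply sound_ax9.
  - apply sound_dne, trans_stable.
  - apply sound_all_e. rewrite <- trans_subst1. apply trans_stable.
  - apply sound_ex_i.
  - eapply sound_mp; [apply trans_stable | eassumption | eassumption].
  - now apply sound_gen.
  - apply sound_all_r; [apply trans_stable | assumption].
  - apply sound_ex_r; [rewrite <- trans_lift | |]; auto using trans_stable.
  - assumption.
  - now apply nn_theorem.
  - apply nn_theorem, (trans_stable _ SPrp).
  - apply nn_return.
  - apply (stable_imp _ SPrp), trans_stable.
  - apply nn_theorem, nn_dist_imp.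
  - apply nn_bot_elim.
  - apply nn_iff; [apply nn_conj_split | apply nn_conj_join].
  - apply nn_iff; [apply nn_disj_split | apply nn_disj_join].
  - apply nn_theorem, qh_refl.
  - apply nn_iff; [apply nn_ex_split | apply nn_ex_join].
  - apply nn_theorem, nn_all_in.
Qed.

Theorem theorem3p5 (Gamma : list iform) (alpha : iform) :
  QHC_der (map emb Gamma) SPrb (emb alpha) -> QH_der Gamma alpha.
Proof.
  intros H. rewrite <- (trans_emb alpha). exact (trans_sound Gamma SPrb (emb alpha) H).
Qed.
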